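(* Let $\mathbb{F}$ be an infinite field. Let $I,J,K,I',J',K'$ be finite sets, $\Lambda\subseteq I\times J\times K$, and let $f:I\to I'$, $g:J\to J'$, $h:K\to K'$ be functions. Then $R_s(\langle\Lambda\rangle)\ge R_s(\langle(f\times g\times h)(\Lambda)\rangle)$.
   Context: For finite sets $I,J,K$ and $\Lambda\subseteq I\times J\times K$, $\langle\Lambda\rangle=\{((i,j),(j,k),(k,i))\in(I\times J)\times(J\times K)\times(K\times I): (i,j,k)\in\Lambda\}$. A tensor over $\mathbb{F}$ is a trilinear form $T=\sum t_{a,b,c}x_ay_bz_c$ with variables indexed by finite sets $A,B,C$; its support is $\{(a,b,c):t_{a,b,c}\neq0\}$; its rank $R(T)$ is the minimal number of products of three linear forms (one in each set of variables) summing to $T$. For $\Phi\subseteq A\times B\times C$, the support rank is $R_s(\Phi)=\min\{R(T):\operatorname{supp}(T)=\Phi\}$. *)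

From HB Require Import structures.
From mathcomp Require Import all_boot all_order all_algebra.
From mathcomp Require Import boolp.
Set Implicit Arguments. Unset Strict Implicit. Unset Printing Implicit Defensive.
Import GRing.Theory.
Local Open Scope ring_scope.

Section Tensors.
Variable F : fieldType.

(* A tensor with variables indexed by finite sets A, B, C is given by its
   coefficient function t : A -> B -> C -> F  (T = sum t_{abc} x_a y_b z_c). *)

Definition rank_le (A B C : finType) (T : A -> B -> C -> F) (r : nat) : Prop :=
  exists (u : 'I_r -> A -> F) (v : 'I_r -> B -> F) (w : 'I_r -> C -> F),
    forall a b c, T a b c = \sum_(l < r) u l a * v l b * w l c.

Definition supp (A B C : finType) (T : A -> B -> C -> F) : {set A * B * C} :=
  [set t | T t.1.1 t.1.2 t.2 != 0].

Definition srank_le (A B C : finType) (Phi : {set A * B * C}) (r : nat) : Prop :=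
  exists T : A -> B -> C -> F, supp T = Phi /\ rank_le T r.

Lemma srank_ex (A B C : finType) (Phi : {set A * B * C}) :
  exists r, `[< srank_le Phi r >].
Proof.
exists #|{: A * B}|; apply/asboolP.
pose T := fun (a : A) (b : B) (c : C) => (((a, b, c) \in Phi) : nat)%:R : F.
exists T; split.
  apply/setP => t; rewrite inE /T; case: t => [[a b] c] /=.
  by case: ((a, b, c) \in Phi); rewrite ?eqxx ?oner_neq0.
exists (fun l a => ((a == (enum_val l).1 : bool) : nat)%:R).
exists (fun l b => ((b == (enum_val l).2 : bool) : nat)%:R).
exists (fun l c => T (enum_val l).1 (enum_val l).2 c).
move=> a b c.
rewrite (reindex (@enum_rank (A * B)%type)) /=; last first.
  by exists enum_val => x _; rewrite ?enum_rankK ?enum_valK.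
rewrite (bigD1 (a, b)) //= big1 ?addr0; last first.
  case=> a' b' /=; rewrite enum_rankK /= => H.
  case: (eqVneq a a') => [Ea|Na]; last by rewrite !mul0r.
  case: (eqVneq b b') => [Eb|Nb]; last by rewrite mulr0 mul0r.
  by move: H; rewrite Ea Eb eqxx.
by rewrite enum_rankK /= !eqxx !mul1r.
Qed.

Definition support_rank (A B C : finType) (Phi : {set A * B * C}) : nat :=
  ex_minn (srank_ex Phi).

End Tensors.

Definition bracket (I J K : finType) (L : {set I * J * K})
  : {set (I * J) * (J * K) * (K * I)} :=
  [set (((t.1.1, t.1.2), (t.1.2, t.2)), (t.2, t.1.1)) | t in L].

Definition image3 (I J K I' J' K' : finType) (f : I -> I') (g : J -> J') (h : K -> K')
  (L : {set I * J * K}) : {set I' * J' * K'} :=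
  [set (f t.1.1, g t.1.2, h t.2) | t in L].

Definition infinite_type (T : eqType) : Prop := ~ exists s : seq T, forall x, x \in s.

From mathcomp Require Import all_boot all_order all_algebra.
From mathcomp Require Import boolp zify ring.
(* Take T of minimal rank with support <Lambda> and push it forward along
   f x g, g x h and h x f.  This is a restriction of T, so its rank does not
   grow, and its support lies in <(f x g x h)(Lambda)>; only cancellation
   inside a fiber can make it smaller.  Weighting the (i,j)-slices by
   x^rank(i,j) and the (k,i)-slices by x^(rank k * |I x J|) makes the entry
   at a target point a polynomial in x with one monomial per preimage in
   Lambda, of pairwise distinct degrees, hence nonzero; as F is infinite, one
   x avoids the roots of all these finitely many polynomials. *)

Set Implicit Arguments. Unset Strict Implicit. Unset Printing Implicit Defensive.
Import GRing.Theory.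
Local Open Scope ring_scope.

Section Restriction.
Variable F : fieldType.
Variables A B C A' B' C' : finType.

Definition tentry (T : A -> B -> C -> F) (t : A * B * C) : F :=
  T t.1.1 t.1.2 t.2.

Definition restrict (P : A' -> A -> F) (Q : B' -> B -> F) (S : C' -> C -> F)
    (T : A -> B -> C -> F) : A' -> B' -> C' -> F :=
  fun a' b' c' => \sum_a \sum_b \sum_c P a' a * Q b' b * S c' c * T a b c.

Lemma rank_le_restrict P Q S (T : A -> B -> C -> F) r :
  rank_le T r -> rank_le (restrict P Q S T) r.
Proof.
case=> u [v [w defT]].
exists (fun l a' => \sum_a P a' a * u l a), (fun l b' => \sum_b Q b' b * v l b).
exists (fun l c' => \sum_c S c' c * w l c) => a' b' c'.
have sum3E l : (\sum_a P a' a * u l a) * (\sum_b Q b' b * v l b) *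
    (\sum_c S c' c * w l c) =
  \sum_a \sum_b \sum_c P a' a * Q b' b * S c' c * (u l a * v l b * w l c).
  rewrite big_distrlr mulr_suml; apply: eq_bigr => a _.
  rewrite mulr_suml; apply: eq_bigr => b _.
  by rewrite mulr_sumr; apply: eq_bigr => c _ /=; ring.
apply/esym; under eq_bigr do rewrite sum3E.
rewrite exchange_big; apply: eq_bigr => a _.
rewrite exchange_big; apply: eq_bigr => b _.
by rewrite exchange_big; apply: eq_bigr => c _; rewrite defT mulr_sumr.
Qed.

Lemma restrict_supp_sum P Q S (T : A -> B -> C -> F) a' b' c' :
  restrict P Q S T a' b' c' =
  \sum_(t in supp T) P a' t.1.1 * Q b' t.1.2 * S c' t.2 * tentry T t.
Proof.
rewrite /restrict pair_bigA /= pair_bigA /= (bigID (mem (supp T))) /=.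
rewrite [X in _ + X]big1 ?addr0 // => -[[a b] c].
by rewrite inE negbK => /eqP ->; rewrite mulr0.
Qed.

End Restriction.

Definition map_pair (A B A' B' : Type) (f : A -> A') (g : B -> B') (p : A * B) :
  A' * B' := (f p.1, g p.2).

Definition map_triple (A B C A' B' C' : Type) (f : A -> A') (g : B -> B')
  (h : C -> C') (t : A * B * C) : A' * B' * C' := (f t.1.1, g t.1.2, h t.2).

Definition bracket_triple (I J K : Type) (t : I * J * K) :
  (I * J) * (J * K) * (K * I) := ((t.1.1, t.1.2), (t.1.2, t.2), (t.2, t.1.1)).
Arguments bracket_triple {I J K}.

Lemma bracketE (I J K : finType) (L : {set I * J * K}) :
  bracket L = bracket_triple @: L.
Proof. by []. Qed.

Lemma image3E (I J K I' J' K' : finType) (f : I -> I') (g : J -> J')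
    (h : K -> K') (L : {set I * J * K}) : image3 f g h L = map_triple f g h @: L.
Proof. by []. Qed.

Lemma bracket_triple_inj (I J K : Type) : injective (@bracket_triple I J K).
Proof. by case=> [[i j] k] [[i' j'] k'] [-> -> _ -> _ _]. Qed.

Lemma mixed_radix_inj (N a b a' b' : nat) :
  (a < N)%N -> (a' < N)%N -> (a + b * N = a' + b' * N)%N -> a = a' /\ b = b'.
Proof.
move=> lt_aN lt_a'N eq_ab; have eq_b : b = b' by nia.
by split; lia.
Qed.

Definition bracket_code (I J K : finType) (t : I * J * K) : nat :=
  enum_rank (t.1.1, t.1.2) + enum_rank t.2 * #|{: I * J}|.

Lemma bracket_code_inj (I J K : finType) : injective (@bracket_code I J K).
Proof.
move=> [[i j] k] [[i' j'] k'] /(mixed_radix_inj (ltn_ord _) (ltn_ord _)).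
by case=> /ord_inj/enum_rank_inj[-> ->] /ord_inj/enum_rank_inj /= ->.
Qed.

Section Polynomials.
Variable F : fieldType.

Lemma sum_monomials_neq0 (X : finType) (D : {pred X}) (c : X -> F)
    (e : X -> nat) (x0 : X) :
  {in D &, injective e} -> x0 \in D -> c x0 != 0 ->
  \sum_(x in D) c x *: 'X^(e x) != 0.
Proof.
move=> inj_e Dx0 cx0; apply: contraNneq cx0 => /(congr1 (coefp (e x0))).
rewrite /= coef0 coef_sum (bigD1 x0) //= coefZ coefXn eqxx mulr1 => <-.
rewrite big1 ?addr0 // => x /andP[Dx neq_x]; rewrite coefZ coefXn.
case: eqP => [/(inj_e _ _ Dx0 Dx) eq_x|_]; last by rewrite mulr0.
by rewrite eq_x eqxx in neq_x.
Qed.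

Hypothesis infF : infinite_type F.

Lemma infinite_uniq_seq n : exists s : seq F, uniq s /\ size s = n.
Proof.
elim: n => [|n [s [uniq_s size_s]]]; first by exists [::].
have [x s'x] : exists x, x \notin s.
  apply: contrapT => all_in; apply: infF; exists s => x.
  by apply: contrapT => /negP s'x; apply: all_in; exists x.
by exists (x :: s); rewrite /= s'x uniq_s size_s.
Qed.

Lemma infinite_nonroot (p : {poly F}) : p != 0 -> exists x, ~~ root p x.
Proof.
move=> p_neq0; have [s [uniq_s size_s]] := infinite_uniq_seq (size p).
have : ~~ all (root p) s.
  apply/negP => roots_s.
  by have := max_poly_roots p_neq0 roots_s uniq_s; rewrite size_s ltnn.
by rewrite -has_predC => /hasP[x _ nroot_x]; exists x.
Qed.

Lemma infinite_common_nonroot (X : finType) (D : {pred X}) (p : X -> {poly F}) :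
  {in D, forall x, p x != 0} -> exists y, {in D, forall x, ~~ root (p x) y}.
Proof.
move=> p_neq0; have /infinite_nonroot[y] : \prod_(x in D) p x != 0.
  exact/prodf_neq0.
by rewrite /root horner_prod => /prodf_neq0 nroot_y; exists y.
Qed.

End Polynomials.

Section Degeneration.
Variable F : fieldType.
Variables I J K I' J' K' : finType.
Variables (f : I -> I') (g : J -> J') (h : K -> K') (L : {set I * J * K}).
Variables (T : I * J -> J * K -> K * I -> F) (x : F).
Hypothesis suppT : supp T = bracket L.

Definition degen : I' * J' -> J' * K' -> K' * I' -> F :=
  restrict
    (fun a' a => (map_pair f g a == a')%:R * x ^+ enum_rank a)
    (fun b' b => (map_pair g h b == b')%:R)
    (fun c' c =>
       (map_pair h f c == c')%:R * x ^+ (enum_rank c.1 * #|{: I * J}|))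
    T.

Lemma degenE p : tentry degen p =
  \sum_(t in L | bracket_triple (map_triple f g h t) == p)
     x ^+ bracket_code t * tentry T (bracket_triple t).
Proof.
rewrite /tentry /degen restrict_supp_sum suppT bracketE.
rewrite big_imset /=; last first.
  by move=> ? ? _ _; apply: bracket_triple_inj.
rewrite big_mkcondr; apply: eq_bigr => -[[i j] k] _.
case: p => -[a' b'] c'; rewrite /bracket_code /map_pair /= !xpair_eqE exprD.
by case: eqP; case: eqP; case: eqP; rewrite /= ?(mulr0, mul0r, mulr1, mul1r).
Qed.

Definition fiber_poly (t' : I' * J' * K') : {poly F} :=
  \sum_(t in L | map_triple f g h t == t')
     tentry T (bracket_triple t) *: 'X^(bracket_code t).

Lemma degen_bracket t' : tentry degen (bracket_triple t') = (fiber_poly t').[x].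
Proof.
rewrite degenE /fiber_poly horner_sum.
apply: congr_big => // [t|t _].
  by rewrite inj_eq //; apply: bracket_triple_inj.
by rewrite hornerZ hornerXn mulrC.
Qed.

Lemma fiber_poly_neq0 t' : t' \in image3 f g h L -> fiber_poly t' != 0.
Proof.
rewrite image3E => /imsetP[t0 Lt0 ->]; apply: (sum_monomials_neq0 (x0 := t0)).
- by move=> ? ? _ _; apply: bracket_code_inj.
- by apply/andP.
have : bracket_triple t0 \in supp T by rewrite suppT bracketE imset_f.
by rewrite inE.
Qed.

Lemma supp_degen :
  {in image3 f g h L, forall t', ~~ root (fiber_poly t') x} ->
  supp degen = bracket (image3 f g h L).
Proof.
move=> nroot_x; apply/setP => p; rewrite inE bracketE.
have [/imsetP[t' Lt' ->]|p_out] :=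
  boolP (p \in bracket_triple @: image3 f g h L).
  by have := nroot_x t' Lt'; rewrite /root -degen_bracket.
apply/negbTE; rewrite negbK -/(tentry degen p) degenE.
apply/eqP/big1 => t /andP[Lt /eqP eq_p].
by case/negP: p_out; rewrite -eq_p image3E !imset_f.
Qed.

End Degeneration.

Lemma support_rank_spec (F : fieldType) (A B C : finType)
    (Phi : {set A * B * C}) :
  srank_le F Phi (support_rank F Phi).
Proof. by rewrite /support_rank; case: ex_minnP => r /asboolP. Qed.

Lemma support_rank_min (F : fieldType) (A B C : finType)
    (Phi : {set A * B * C}) r :
  srank_le F Phi r -> (support_rank F Phi <= r)%N.
Proof.
by rewrite /support_rank; case: ex_minnP => r0 _ min_r0 /asboolP /min_r0.
Qed.

Theorem corollary4p3 (F : fieldType) (hF : infinite_type F)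
  (I J K I' J' K' : finType) (L : {set I * J * K})
  (f : I -> I') (g : J -> J') (h : K -> K') :
  (support_rank F (bracket (image3 f g h L)) <= support_rank F (bracket L))%N.
Proof.
have [T [suppT rankT]] := support_rank_spec F (bracket L).
have [x nroot_x] :=
  infinite_common_nonroot hF (fiber_poly_neq0 (f := f) (g := g) (h := h) suppT).
apply: support_rank_min; exists (degen f g h T x); split.
  exact: supp_degen.
exact: rank_le_restrict.
Qed.
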